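(* Let $M$ and $N$ be MV-algebras. (1) For every probability map $p\colon M\to N$, the dual map $p'\colon\operatorname{Max}N\to\operatorname{St}M$ is continuous. (2) If $N$ is semisimple, then the assignment $p\mapsto p'$ is a bijection from the set of probability maps $M\to N$ onto the set of their duals.
   Context: For an MV-algebra $(M,\oplus,\neg,0)$: $1\coloneqq\neg 0$, $a\odot b\coloneqq \neg(\neg a\oplus\neg b)$, $a\vee b\coloneqq\neg(\neg a\oplus b)\oplus b$, $a\wedge b\coloneqq\neg(\neg a\vee\neg b)$. A probability map is a function $p\colon M\to N$ between MV-algebras such that for all $a,b\in M$: (P1) $p(a\oplus b)=p(a)\oplus p(b\wedge\neg a)$; (P2) $p(\neg a)=\neg p(a)$; (P3) $p(1)=1$. A state of $M$ is a map $s\colon M\to[0,1]$ with $s(1)=1$ and $s(a\oplus b)=s(a)+s(b)$ whenever $a\odot b=0$; $\operatorname{St}M$ is the set of states with the topology of pointwise convergence (subspace of $[0,1]^M$). $\operatorname{Max}N$ is the compact Hausdorff space of maximal ideals of $N$; for $\mathfrak{n}\in\operatorname{Max}N$ let $h_{\mathfrak{n}}$ be the unique MV-isomorphism of $N/\mathfrak{n}$ onto a subalgebra of $[0,1]$ and $b^*(\mathfrak{n})\coloneqq h_{\mathfrak{n}}(b/\mathfrak{n})$ for $b\in N$ (so $b^*$ is continuous and $b\mapsto b^*$ is an MV-homomorphism). The dual of a probability map $p\colon M\to N$ is $p'\colon \operatorname{Max}N\to\operatorname{St}M$, $p'(\mathfrak{n})(a)\coloneqq p(a)^*(\mathfrak{n})$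 for $a\in M$. $N$ is semisimple if the intersection of its maximal ideals is $\{0\}$. *)

From Stdlib Require Import Reals ClassicalEpsilon.
Open Scope R_scope.

Record MVAlgebra := {
  mv_car :> Type;
  mv_add : mv_car -> mv_car -> mv_car;
  mv_neg : mv_car -> mv_car;
  mv_zero : mv_car;
  mv_assoc : forall x y z, mv_add x (mv_add y z) = mv_add (mv_add x y) z;
  mv_comm : forall x y, mv_add x y = mv_add y x;
  mv_add0 : forall x, mv_add x mv_zero = x;
  mv_negK : forall x, mv_neg (mv_neg x) = x;
  mv_add1 : forall x, mv_add x (mv_neg mv_zero) = mv_neg mv_zero;
  mv_luk : forall x y,
    mv_add (mv_neg (mv_add (mv_neg x) y)) y = mv_add (mv_neg (mv_add (mv_neg y) x)) x
}.

Arguments mv_add {m}.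
Arguments mv_neg {m}.
Arguments mv_zero {m}.

Section Ops.
Context {A : MVAlgebra}.
Definition mv_one : A := mv_neg mv_zero.
Definition mv_odot (a b : A) : A := mv_neg (mv_add (mv_neg a) (mv_neg b)).
Definition mv_vee (a b : A) : A := mv_add (mv_neg (mv_add (mv_neg a) b)) b.
Definition mv_wedge (a b : A) : A := mv_neg (mv_vee (mv_neg a) (mv_neg b)).
Definition mv_le (a b : A) : Prop := mv_add (mv_neg a) b = mv_one.

Definition is_ideal (I : A -> Prop) : Prop :=
  I mv_zero /\ (forall a b, I a -> I b -> I (mv_add a b)) /\
  (forall a b, I a -> mv_le b a -> I b).

Definition is_maximal (I : A -> Prop) : Prop :=
  is_ideal I /\ ~ I mv_one /\
  (forall J, is_ideal J -> (forall x, I x -> J x) ->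
     (forall x, J x -> I x) \/ (forall x, J x)).
End Ops.

Definition MaxN (N : MVAlgebra) : Type := { I : N -> Prop | is_maximal I }.

Definition semisimple (N : MVAlgebra) : Prop :=
  forall b : N, (forall I : N -> Prop, is_maximal I -> I b) -> b = mv_zero.

Definition is_prob_map {M N : MVAlgebra} (p : M -> N) : Prop :=
  (forall a b, p (mv_add a b) = mv_add (p a) (p (mv_wedge b (mv_neg a)))) /\
  (forall a, p (mv_neg a) = mv_neg (p a)) /\
  p mv_one = mv_one.

Definition is_state {M : MVAlgebra} (s : M -> R) : Prop :=
  (forall a, 0 <= s a <= 1) /\ s mv_one = 1 /\
  (forall a b, mv_odot a b = mv_zero -> s (mv_add a b) = s a + s b).

Definition is_unit_hom {N : MVAlgebra} (h : N -> R) : Prop :=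
  (forall b, 0 <= h b <= 1) /\ h mv_zero = 0 /\
  (forall b, h (mv_neg b) = 1 - h b) /\
  (forall a b, h (mv_add a b) = Rmin 1 (h a + h b)).

(** h_n composed with the quotient map N -> N/n: the (unique) MV-homomorphism
    N -> [0,1] whose kernel is n. *)
Definition hom_of_max {N : MVAlgebra} (n : N -> Prop) : N -> R :=
  epsilon (inhabits (fun _ : N => 0))
    (fun h => is_unit_hom h /\ forall b, h b = 0 <-> n b).

Definition star {N : MVAlgebra} (b : N) (n : MaxN N) : R :=
  hom_of_max (proj1_sig n) b.

(** the dual p' : Max N -> St M (as a map into [0,1]^M) *)
Definition dual {M N : MVAlgebra} (p : M -> N) (n : MaxN N) : M -> R :=
  fun a => star (p a) n.

Definition is_topology {X : Type} (T : (X -> Prop) -> Prop) : Prop :=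
  T (fun _ => True) /\
  (forall U V, T U -> T V -> T (fun x => U x /\ V x)) /\
  (forall F : (X -> Prop) -> Prop, (forall U, F U -> T U) ->
     T (fun x => exists U, F U /\ U x)).

Definition gen_open {X : Type} (S : (X -> Prop) -> Prop) (U : X -> Prop) : Prop :=
  forall T : (X -> Prop) -> Prop, is_topology T -> (forall B, S B -> T B) -> T U.

Definition max_open (N : MVAlgebra) : (MaxN N -> Prop) -> Prop :=
  gen_open (fun B => exists b : N, B = fun n => ~ proj1_sig n b).

Definition ptw_open (M : MVAlgebra) : ((M -> R) -> Prop) -> Prop :=
  gen_open (fun B => exists (a : M) (U : R -> Prop),
                       open_set U /\ B = fun g => U (g a)).

(** continuity of f : Max N -> R^M (for f with values in St M this is
    continuity into the subspace St M of [0,1]^M) *)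
Definition continuous_max_ptw {M N : MVAlgebra} (f : MaxN N -> M -> R) : Prop :=
  forall V, ptw_open M V -> max_open N (fun n => V (f n)).

(* For a maximal ideal n of N the quotient N/n is a chain (by prelinearity) in which every
   nonzero element has a multiple equal to 1 (by maximality).  Reading off binary digits —
   an element lies below 1/2 iff its ⊙-square is in n, and one moves on to its ⊕-double or
   its ⊙-square accordingly — yields a map N -> [0,1] with kernel n.  It preserves ¬ and ⊕
   because any failure of these identities would be doubled by the digit shift while staying
   bounded.  Thus every b^* is a [0,1]-valued homomorphism and p'(n) is a state.  A set
   {n | c < b^*(n)} is a union of basic opens {n | t ∉ n}, where t is obtained from b by
   doubling and squaring along the binary digits of a dyadic number between c and b^*(n);
   this gives continuity.  Finally, in a semisimple algebra u = v as soon as the distance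
   u ⊙ ¬v ⊕ v ⊙ ¬u lies in every maximal ideal, i.e. as soon as u^* = v^*. *)

From Stdlib Require Import Reals Lra Lia ZArith List Permutation Mergesort.
From Stdlib Require Import Classical ClassicalEpsilon FunctionalExtensionality PropExtensionality.
Import ListNotations.

Local Notation "x ⊕ y" := (mv_add x y) (at level 50, left associativity).
Local Notation "¬ x" := (mv_neg x) (at level 35, right associativity).
Local Notation "x ⊙ y" := (mv_odot x y) (at level 40, left associativity).
Local Notation "x ≤ y" := (mv_le x y) (at level 70, no associativity).

(** * Identities of MV-algebras *)

Section MVIdentities.
Context {A : MVAlgebra}.
Implicit Types a b c d u v x y z : A.

Lemma addA x y z : x ⊕ (y ⊕ z) = x ⊕ y ⊕ z. Proof. apply mv_assoc. Qed.
Lemma addC x y : x ⊕ y = y ⊕ x. Proof. apply mv_comm. Qed.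
Lemma add0 x : x ⊕ mv_zero = x. Proof. apply mv_add0. Qed.
Lemma add0l x : mv_zero ⊕ x = x. Proof. rewrite addC; apply add0. Qed.
Lemma negK x : ¬ ¬ x = x. Proof. apply mv_negK. Qed.
Lemma add1 x : x ⊕ mv_one = mv_one. Proof. apply mv_add1. Qed.
Lemma add1l x : mv_one ⊕ x = mv_one. Proof. rewrite addC; apply add1. Qed.
Lemma neg0 : ¬ mv_zero = mv_one :> A. Proof. reflexivity. Qed.
Lemma neg1 : ¬ mv_one = mv_zero :> A. Proof. apply negK. Qed.

Lemma addN x : x ⊕ ¬ x = mv_one.
Proof.
  pose proof (mv_luk A x mv_one) as H. fold (@mv_one A) in H.
  rewrite add1, neg1, add0l in H. rewrite addC. symmetry; exact H.
Qed.
Lemma Nadd x : ¬ x ⊕ x = mv_one. Proof. rewrite addC; apply addN. Qed.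

Lemma negodot x y : ¬ (x ⊙ y) = ¬ x ⊕ ¬ y. Proof. apply negK. Qed.
Lemma negadd x y : ¬ (x ⊕ y) = ¬ x ⊙ ¬ y. Proof. unfold mv_odot; rewrite !negK; reflexivity. Qed.
Lemma odotC x y : x ⊙ y = y ⊙ x. Proof. unfold mv_odot; rewrite addC; reflexivity. Qed.
Lemma odotA x y z : x ⊙ (y ⊙ z) = x ⊙ y ⊙ z.
Proof. unfold mv_odot; rewrite !negK, addA; reflexivity. Qed.
Lemma odot1 x : x ⊙ mv_one = x. Proof. unfold mv_odot; rewrite neg1, add0, negK; reflexivity. Qed.
Lemma odot1l x : mv_one ⊙ x = x. Proof. rewrite odotC; apply odot1. Qed.
Lemma odot0 x : x ⊙ mv_zero = mv_zero. Proof. unfold mv_odot; rewrite neg0, add1, neg1; reflexivity. Qed.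
Lemma odotN x : x ⊙ ¬ x = mv_zero. Proof. unfold mv_odot; rewrite negK, Nadd, neg1; reflexivity. Qed.

Lemma veeC a b : mv_vee a b = mv_vee b a. Proof. apply mv_luk. Qed.
Lemma vee_odotN u v : u ⊙ ¬ v ⊕ v = mv_vee u v.
Proof. unfold mv_odot, mv_vee; rewrite !negK; reflexivity. Qed.
Lemma vee_odot u v : u ⊙ v ⊕ ¬ v = mv_vee u (¬ v).
Proof. rewrite <- vee_odotN, negK; reflexivity. Qed.
Lemma wedgeE a b : mv_wedge a b = (a ⊕ ¬ b) ⊙ b.
Proof. unfold mv_wedge, mv_vee, mv_odot; rewrite !negK; reflexivity. Qed.
Lemma wedgeC a b : mv_wedge a b = mv_wedge b a.
Proof. unfold mv_wedge; rewrite veeC; reflexivity. Qed.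

Lemma mvle_addr x c : x ≤ x ⊕ c.
Proof. unfold mv_le. rewrite addA, Nadd, add1l. reflexivity. Qed.
Lemma mvle_addl x c : x ≤ c ⊕ x.
Proof. rewrite addC; apply mvle_addr. Qed.
Lemma mvle_refl a : a ≤ a. Proof. apply Nadd. Qed.
Lemma mvle_0 a : mv_zero ≤ a. Proof. apply add1l. Qed.
Lemma mvle_1 a : a ≤ mv_one. Proof. apply add1. Qed.
Lemma mvle_1_eq a : mv_one ≤ a -> a = mv_one.
Proof. unfold mv_le; rewrite neg1, add0l; auto. Qed.

Lemma mvle_decomp a b : a ≤ b -> b = a ⊕ b ⊙ ¬ a.
Proof.
  intro H. rewrite (addC a), vee_odotN, veeC. unfold mv_vee, mv_le in *.
  rewrite H, neg1, add0l. reflexivity.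
Qed.
Lemma mvle_vee a b : a ≤ b -> mv_vee a b = b.
Proof. unfold mv_vee, mv_le. intro H. rewrite H, neg1, add0l; reflexivity. Qed.
Lemma mvle_wedge a b : a ≤ b -> mv_wedge a b = a.
Proof.
  intro H. unfold mv_wedge. rewrite veeC, mvle_vee; [apply negK|].
  unfold mv_le in *. rewrite negK, addC; auto.
Qed.

Lemma mvle_trans a b c : a ≤ b -> b ≤ c -> a ≤ c.
Proof.
  intros Hab Hbc. rewrite (mvle_decomp _ _ Hbc), (mvle_decomp _ _ Hab), <- addA.
  apply mvle_addr.
Qed.
Lemma mvle_antisym a b : a ≤ b -> b ≤ a -> a = b.
Proof.
  intros Hab Hba. rewrite <- (mvle_vee _ _ Hab), veeC. symmetry; apply mvle_vee; auto.
Qed.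
Lemma mvle_0_eq a : a ≤ mv_zero -> a = mv_zero.
Proof. intro; apply mvle_antisym; auto; apply mvle_0. Qed.

Lemma mvle_add2r a b c : a ≤ b -> a ⊕ c ≤ b ⊕ c.
Proof.
  intro H. rewrite (mvle_decomp _ _ H). set (e := b ⊙ ¬ a).
  rewrite <- addA, (addC e c), addA. apply mvle_addr.
Qed.
Lemma mvle_add2l a b c : a ≤ b -> c ⊕ a ≤ c ⊕ b.
Proof. rewrite (addC c a), (addC c b). apply mvle_add2r. Qed.
Lemma mvle_add a b c d : a ≤ b -> c ≤ d -> a ⊕ c ≤ b ⊕ d.
Proof.
  intros H1 H2. apply mvle_trans with (b ⊕ c); [apply mvle_add2r | apply mvle_add2l]; auto.
Qed.
Lemma mvle_neg a b : a ≤ b -> ¬ b ≤ ¬ a.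
Proof. unfold mv_le; rewrite negK, addC; auto. Qed.
Lemma mvle_odot2r a b c : a ≤ b -> a ⊙ c ≤ b ⊙ c.
Proof. intro H. apply mvle_neg, mvle_add2r, mvle_neg; auto. Qed.
Lemma mvle_odot2l a b c : a ≤ b -> c ⊙ a ≤ c ⊙ b.
Proof. rewrite (odotC c a), (odotC c b). apply mvle_odot2r. Qed.
Lemma mvle_odotl x y : x ⊙ y ≤ x.
Proof.
  unfold mv_le, mv_odot. rewrite negK, (addC _ x), addA, addN, add1l. reflexivity.
Qed.
Lemma mvle_odotr x y : x ⊙ y ≤ y.
Proof. rewrite odotC; apply mvle_odotl. Qed.
Lemma mvle_veer x y : y ≤ mv_vee x y. Proof. apply mvle_addl. Qed.
Lemma mvle_veel x y : x ≤ mv_vee x y. Proof. rewrite veeC; apply mvle_veer. Qed.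
Lemma mvle_wedger a b : mv_wedge a b ≤ b. Proof. rewrite wedgeE; apply mvle_odotr. Qed.
Lemma mvle_wedgel a b : mv_wedge a b ≤ a. Proof. rewrite wedgeC; apply mvle_wedger. Qed.
Lemma mvle_odot_wedge a b : a ⊙ b ≤ mv_wedge a b.
Proof. rewrite wedgeC, wedgeE, (odotC a b). apply mvle_odot2r, mvle_addr. Qed.
Lemma odot_eq0_le a b : a ⊙ b = mv_zero -> a ≤ ¬ b.
Proof. unfold mv_le. intro H. rewrite <- negodot, H. reflexivity. Qed.

Lemma eq_of_dist_eq0 u v : u ⊙ ¬ v ⊕ v ⊙ ¬ u = mv_zero -> u = v.
Proof.
  intro D.
  assert (Huv : u ⊙ ¬ v = mv_zero) by (apply mvle_0_eq; rewrite <- D; apply mvle_addr).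
  assert (Hvu : v ⊙ ¬ u = mv_zero) by (apply mvle_0_eq; rewrite <- D; apply mvle_addl).
  apply odot_eq0_le in Huv, Hvu. rewrite negK in Huv, Hvu. apply mvle_antisym; auto.
Qed.

Lemma odot_add_absorb a b : a ⊙ b ⊕ (a ⊕ b) = a ⊕ b.
Proof.
  assert (E1 : a ⊕ b = b ⊕ (a ⊕ b) ⊙ ¬ b) by (apply mvle_decomp, mvle_addl).
  assert (E2 : (a ⊕ b) ⊙ ¬ b = a ⊙ ¬ (a ⊙ b)).
  { rewrite negodot, <- (negK b) at 1. rewrite <- wedgeE, wedgeC, wedgeE, (addC (¬ b)), odotC.
    reflexivity. }
  assert (E3 : a = a ⊙ b ⊕ a ⊙ ¬ (a ⊙ b)) by (apply mvle_decomp, mvle_odotl).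
  rewrite E1 at 1. rewrite E2, addA, (addC (a ⊙ b) b), <- addA, <- E3, addC. reflexivity.
Qed.

Lemma prelinearity u v : mv_wedge (u ⊙ ¬ v) (v ⊙ ¬ u) = mv_zero.
Proof.
  unfold mv_wedge. rewrite !negodot, !negK.
  unfold mv_vee. rewrite (negadd (¬ u) v), negK, (addC (¬ v) u), odot_add_absorb, <- (addC (¬ v)).
  rewrite Nadd. apply neg1.
Qed.

Fixpoint nmul (k : nat) x : A := match k with O => mv_zero | S k => x ⊕ nmul k x end.

Lemma nmulD k k' x : nmul (k + k') x = nmul k x ⊕ nmul k' x.
Proof. induction k; simpl. rewrite add0l; auto. rewrite IHk, addA; auto. Qed.

Lemma wedge_eq0_addl x y z :
  mv_wedge x y = mv_zero -> mv_wedge z y = mv_zero -> mv_wedge (x ⊕ z) y = mv_zero.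
Proof.
  intros Hx Hz.
  assert (F : forall t, mv_wedge t y = y ⊙ (¬ y ⊕ t)).
  { intro t. rewrite wedgeE, odotC, addC. reflexivity. }
  assert (Hy : y ≤ y ⊙ ¬ x).
  { rewrite F in Hx. apply odot_eq0_le in Hx. unfold mv_odot. rewrite negK. exact Hx. }
  apply mvle_0_eq. rewrite F, <- Hz, F.
  apply mvle_trans with (y ⊙ ¬ x ⊙ (¬ y ⊕ (x ⊕ z))); [apply mvle_odot2r; auto|].
  rewrite <- odotA. apply mvle_odot2l.
  rewrite addA, (addC (¬ y) x), <- addA, (addC x).
  replace (¬ x ⊙ (¬ y ⊕ z ⊕ x)) with (mv_wedge (¬ y ⊕ z) (¬ x))
    by (rewrite wedgeE, negK, odotC; reflexivity).
  apply mvle_wedgel.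
Qed.

Lemma wedge_eq0_nmul k x y : mv_wedge x y = mv_zero -> mv_wedge (nmul k x) y = mv_zero.
Proof.
  intro H. induction k; simpl.
  - apply mvle_0_eq, mvle_wedgel.
  - apply wedge_eq0_addl; auto.
Qed.

End MVIdentities.

Inductive ac_term := ac_atom (k : nat) | ac_add (s t : ac_term).

Section ACNormalisation.
Context {A : MVAlgebra}.
Variable env : list A.

Fixpoint ac_eval (t : ac_term) : A :=
  match t with
  | ac_atom k => nth k env mv_zero
  | ac_add s t => ac_eval s ⊕ ac_eval t
  end.
Fixpoint ac_atoms (t : ac_term) : list nat :=
  match t with ac_atom k => [k] | ac_add s t => ac_atoms s ++ ac_atoms t end.
Definition ac_sum (l : list nat) : A :=
  fold_right (fun k acc => nth k env mv_zero ⊕ acc) mv_zero l.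

Lemma ac_sum_app l1 l2 : ac_sum (l1 ++ l2) = ac_sum l1 ⊕ ac_sum l2.
Proof. induction l1; simpl. rewrite add0l; auto. rewrite IHl1, addA; auto. Qed.
Lemma ac_evalE t : ac_eval t = ac_sum (ac_atoms t).
Proof. induction t; simpl. rewrite add0; auto. rewrite ac_sum_app, IHt1, IHt2; auto. Qed.
Lemma ac_sum_perm l1 l2 : Permutation l1 l2 -> ac_sum l1 = ac_sum l2.
Proof.
  induction 1; simpl; try congruence.
  rewrite !addA, (addC (nth y env mv_zero)); auto.
Qed.

Lemma ac_eval_sort s t :
  NatSort.sort (ac_atoms s) = NatSort.sort (ac_atoms t) -> ac_eval s = ac_eval t.
Proof.
  intro H. rewrite !ac_evalE, (ac_sum_perm _ _ (NatSort.Permuted_sort (ac_atoms s))).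
  rewrite (ac_sum_perm _ _ (NatSort.Permuted_sort (ac_atoms t))), H; auto.
Qed.
End ACNormalisation.

Ltac ac_mem a l :=
  match l with
  | nil => constr:(false)
  | cons a _ => constr:(true)
  | cons _ ?l' => ac_mem a l'
  end.
Ltac ac_collect t l :=
  match t with
  | mv_add ?a ?b => let l1 := ac_collect a l in ac_collect b l1
  | _ => match ac_mem t l with true => l | false => constr:(cons t l) end
  end.
Ltac ac_index a l :=
  match l with
  | cons a _ => constr:(O)
  | cons _ ?l' => let k := ac_index a l' in constr:(S k)
  end.
Ltac ac_reify t l :=
  match t with
  | mv_add ?a ?b => let s := ac_reify a l in let u := ac_reify b l in constr:(ac_add s u)
  | _ => let k := ac_index t l in constr:(ac_atom k)
  end.

(* Closes equations between ⊕-sums that agree up to associativity and commutativity. *)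
Ltac mv_ac :=
  match goal with
  | |- @eq (mv_car ?M) ?L ?R =>
    let l := ac_collect R ltac:(ac_collect L (@nil (mv_car M))) in
    let s := ac_reify L l in let t := ac_reify R l in
    change (ac_eval l s = ac_eval l t); apply ac_eval_sort; vm_compute; reflexivity
  end.


(** * The quotient by a maximal ideal *)

Section QuotientChain.
Context {A : MVAlgebra}.
Implicit Types a b c u v w x y z : A.
Variable n : A -> Prop.
Hypothesis n_max : is_maximal n.

Lemma ideal0 : n mv_zero. Proof. apply n_max. Qed.
Lemma idealD a b : n a -> n b -> n (a ⊕ b). Proof. apply n_max. Qed.
Lemma ideal_le a b : n a -> b ≤ a -> n b. Proof. apply n_max. Qed.
Lemma ideal_not1 : ~ n mv_one. Proof. apply n_max. Qed.

Lemma max_ideal_archimedean x : ~ n x -> exists k, n (¬ nmul k x).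
Proof.
  intro Hx.
  set (J := fun z => exists k i, n i /\ z ≤ nmul k x ⊕ i).
  assert (HJ : is_ideal J).
  { split; [|split].
    - exists O, mv_zero. split; [apply ideal0 | apply mvle_0].
    - intros a b [k [i [Hi Ha]]] [k' [i' [Hi' Hb]]].
      exists (k + k')%nat, (i ⊕ i'). split; [apply idealD; auto|].
      apply mvle_trans with (nmul k x ⊕ i ⊕ (nmul k' x ⊕ i')); [apply mvle_add; auto|].
      rewrite nmulD. replace (nmul k x ⊕ nmul k' x ⊕ (i ⊕ i')) with
        (nmul k x ⊕ i ⊕ (nmul k' x ⊕ i')) by mv_ac. apply mvle_refl.
    - intros a b [k [i [Hi Ha]]] Hba. exists k, i. split; eauto using mvle_trans. }
  destruct n_max as [_ [_ Hmax]]. destruct (Hmax J HJ) as [HJn | HJall].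
  - intros z Hz. exists O, z. split; auto. simpl. rewrite add0l. apply mvle_refl.
  - exfalso. apply Hx, HJn. exists 1%nat, mv_zero. split; [apply ideal0|].
    simpl. rewrite !add0. apply mvle_refl.
  - destruct (HJall mv_one) as [k [i [Hi H1]]]. exists k. apply ideal_le with i; auto.
    apply mvle_1_eq in H1. unfold mv_le. rewrite negK. auto.
Qed.

(* [qle u v] and [qeq u v] say [u/n <= v/n] and [u/n = v/n] in the quotient N/n. *)
Definition qle u v := n (u ⊙ ¬ v).
Definition qeq u v := qle u v /\ qle v u.

Lemma qle_of_le a b : a ≤ b -> qle a b.
Proof.
  intro H. unfold qle. replace (a ⊙ ¬ b) with (@mv_zero A); [apply ideal0|].
  symmetry. apply mvle_0_eq. rewrite <- (odotN b). apply mvle_odot2r; auto.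
Qed.
Lemma qle_refl u : qle u u. Proof. apply qle_of_le, mvle_refl. Qed.

Lemma qle_trans u v w : qle u v -> qle v w -> qle u w.
Proof.
  unfold qle. intros Huv Hvw. apply ideal_le with (u ⊙ ¬ v ⊕ v ⊙ ¬ w); [apply idealD; auto|].
  unfold mv_le. apply mvle_1_eq. rewrite negodot, negK. rewrite <- (Nadd v).
  replace (¬ u ⊕ w ⊕ (u ⊙ ¬ v ⊕ v ⊙ ¬ w)) with ((¬ v ⊙ ¬ ¬ u ⊕ ¬ u) ⊕ (v ⊙ ¬ w ⊕ w))
    by (rewrite negK, (odotC (¬ v)); mv_ac).
  rewrite !vee_odotN. apply mvle_add; apply mvle_veel.
Qed.

Lemma qle_add2r u v w : qle u v -> qle (u ⊕ w) (v ⊕ w).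
Proof.
  unfold qle. intro H. apply ideal_le with (u ⊙ ¬ v); auto.
  unfold mv_le. apply mvle_1_eq. rewrite negodot, negK, <- (Nadd (u ⊕ w)).
  replace (¬ (u ⊕ w) ⊕ (v ⊕ w) ⊕ u ⊙ ¬ v) with (¬ (u ⊕ w) ⊕ (w ⊕ (u ⊙ ¬ v ⊕ v))) by mv_ac.
  rewrite (addC u w). apply mvle_add2l, mvle_add2l. rewrite vee_odotN. apply mvle_veel.
Qed.
Lemma qle_add2l u v w : qle u v -> qle (w ⊕ u) (w ⊕ v).
Proof. rewrite (addC w u), (addC w v). apply qle_add2r. Qed.
Lemma qle_neg u v : qle u v -> qle (¬ v) (¬ u).
Proof. unfold qle. rewrite negK, odotC; auto. Qed.
Lemma qle_odot2r u v w : qle u v -> qle (u ⊙ w) (v ⊙ w).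
Proof. intro H. apply qle_neg, qle_add2r, qle_neg; auto. Qed.
Lemma qle_odot2l u v w : qle u v -> qle (w ⊙ u) (w ⊙ v).
Proof. rewrite (odotC w u), (odotC w v). apply qle_odot2r. Qed.

Lemma qle0_ideal z : qle z mv_zero <-> n z.
Proof. unfold qle. rewrite neg0, odot1. tauto. Qed.
Lemma qle1_ideal z : qle mv_one z <-> n (¬ z).
Proof. unfold qle. rewrite odot1l. tauto. Qed.
Lemma qle_negr x y : qle x (¬ y) = n (x ⊙ y).
Proof. unfold qle. rewrite negK. reflexivity. Qed.
Lemma qle_residual a b c : qle (a ⊙ b) c <-> qle a (¬ b ⊕ c).
Proof. unfold qle. rewrite negadd, negK, odotA. tauto. Qed.

Lemma ideal_qle a b : n a -> qle b a -> n b.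
Proof.
  intros Ha H. apply qle0_ideal. apply qle_trans with a; auto. apply qle0_ideal; auto.
Qed.
Lemma qle_of_ideal a b : n a -> qle a b.
Proof. intro H. apply ideal_le with a; auto. apply mvle_odotl. Qed.

(* By prelinearity the multiples of [u ⊙ ¬ v] and [v ⊙ ¬ u] have meet 0, so their negations
   cannot both lie in the proper ideal [n]. *)
Lemma qle_total u v : qle u v \/ qle v u.
Proof.
  apply NNPP. intros Hnot. apply not_or_and in Hnot as [Huv Hvu]. unfold qle in Huv, Hvu.
  destruct (max_ideal_archimedean _ Huv) as [k Hk].
  destruct (max_ideal_archimedean _ Hvu) as [k' Hk'].
  set (a := u ⊙ ¬ v) in *. set (b := v ⊙ ¬ u) in *. set (K := (k + k')%nat).
  assert (Ha : n (¬ nmul K a)).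
  { apply ideal_le with (¬ nmul k a); auto. apply mvle_neg. unfold K. rewrite nmulD. apply mvle_addr. }
  assert (Hb : n (¬ nmul K b)).
  { apply ideal_le with (¬ nmul k' b); auto. apply mvle_neg. unfold K. rewrite nmulD. apply mvle_addl. }
  assert (Hab : nmul K b ⊙ nmul K a = mv_zero).
  { apply mvle_0_eq. rewrite <- (wedge_eq0_nmul K b (nmul K a)).
    - apply mvle_odot_wedge.
    - rewrite wedgeC. apply wedge_eq0_nmul, prelinearity. }
  apply ideal_not1. rewrite <- neg0, <- Hab, negodot. apply idealD; auto.
Qed.

Lemma qeq_refl u : qeq u u. Proof. split; apply qle_refl. Qed.
Lemma qeq_sym u v : qeq u v -> qeq v u. Proof. unfold qeq; tauto. Qed.
Lemma qeq_trans u v w : qeq u v -> qeq v w -> qeq u w.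
Proof. intros [H1 H2] [H3 H4]; split; eapply qle_trans; eauto. Qed.
Lemma qeq_add u v u' v' : qeq u u' -> qeq v v' -> qeq (u ⊕ v) (u' ⊕ v').
Proof.
  intros [H1 H2] [H3 H4]; split.
  - apply qle_trans with (u' ⊕ v); [apply qle_add2r | apply qle_add2l]; auto.
  - apply qle_trans with (u ⊕ v'); [apply qle_add2r | apply qle_add2l]; auto.
Qed.
Lemma qeq_neg u v : qeq u v -> qeq (¬ u) (¬ v).
Proof. intros [H1 H2]; split; apply qle_neg; auto. Qed.
Lemma qeq_odot u v u' v' : qeq u u' -> qeq v v' -> qeq (u ⊙ v) (u' ⊙ v').
Proof. intros. apply qeq_neg, qeq_add; apply qeq_neg; auto. Qed.
Lemma ideal_qeq a b : n a -> qeq a b -> n b.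
Proof. intros Ha [_ H]. apply ideal_qle with a; auto. Qed.
Lemma qeq_of_ideal a b : n a -> n b -> qeq a b.
Proof. split; apply qle_of_ideal; auto. Qed.

Lemma qeq_veel u v : qle v u -> qeq (mv_vee u v) u.
Proof.
  intro H. rewrite veeC. split; [|apply qle_of_le, mvle_veer].
  rewrite <- vee_odotN. apply qle_trans with (mv_zero ⊕ u).
  - apply qle_add2r, qle0_ideal, H.
  - rewrite add0l. apply qle_refl.
Qed.
Lemma qeq_wedge a b : qle a b -> qeq (mv_wedge a b) a.
Proof.
  intro H. unfold mv_wedge. rewrite <- (negK a) at 2. apply qeq_neg, qeq_veel, qle_neg, H.
Qed.

Lemma qeq_add_odotN a c : n (a ⊙ c) -> qeq ((a ⊕ c) ⊙ ¬ c) a.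
Proof.
  intro H. replace ((a ⊕ c) ⊙ ¬ c) with (mv_wedge a (¬ c)) by (rewrite wedgeE, negK; auto).
  apply qeq_wedge. rewrite qle_negr. exact H.
Qed.
Lemma qeq_add2r_cancel a b c : n (a ⊙ c) -> n (b ⊙ c) -> qeq (a ⊕ c) (b ⊕ c) -> qeq a b.
Proof.
  intros Ha Hb H. apply qeq_trans with ((a ⊕ c) ⊙ ¬ c); [apply qeq_sym, qeq_add_odotN; auto|].
  apply qeq_trans with ((b ⊕ c) ⊙ ¬ c); [apply qeq_odot; auto; apply qeq_refl|].
  apply qeq_add_odotN; auto.
Qed.
Lemma qle_add2r_cancel a b c : n (a ⊙ c) -> qle (a ⊕ c) (b ⊕ c) -> qle a b.
Proof.
  intros Ha H. apply qle_trans with ((a ⊕ c) ⊙ ¬ c); [apply qeq_add_odotN; auto|].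
  apply qle_trans with ((b ⊕ c) ⊙ ¬ c); [apply qle_odot2r; auto|].
  replace ((b ⊕ c) ⊙ ¬ c) with (mv_wedge b (¬ c)) by (rewrite wedgeE, negK; auto).
  apply qle_of_le, mvle_wedgel.
Qed.

(* In [0,1] both sides equal [a + b + c - 1] when [a + b <= 1 <= b + c]. *)
Lemma qeq_add_odot_assoc a b c :
  n (a ⊙ b) -> n (¬ (b ⊕ c)) -> qeq ((a ⊕ b) ⊙ c) (a ⊕ b ⊙ c).
Proof.
  intros Hab Hbc.
  assert (Hcb : qle (¬ c) b) by (unfold qle; rewrite odotC, <- negadd; exact Hbc).
  assert (Hbc' : qle (¬ b) c) by (rewrite <- (negK c); apply qle_neg, Hcb).
  apply (qeq_add2r_cancel _ _ (¬ c)).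
  - rewrite <- odotA, odotN, odot0. apply ideal0.
  - change (qle (a ⊕ b ⊙ c) c). apply qle_trans with (¬ b ⊕ b ⊙ c).
    + apply qle_add2r. unfold qle. rewrite negK. auto.
    + rewrite addC, (odotC b c), vee_odot. apply qeq_veel, Hbc'.
  - apply qeq_trans with (a ⊕ b).
    + rewrite vee_odot. apply qeq_veel. apply qle_trans with b; auto. apply qle_of_le, mvle_addl.
    + rewrite <- addA, vee_odot. apply qeq_add; [apply qeq_refl|]. apply qeq_sym, qeq_veel, Hcb.
Qed.

(* If [x/n] corresponds to [t ∈ [0,1]], then [x ⊙ x] and [x ⊕ x] correspond to
   [max(0, 2t - 1)] and [min(1, 2t)], so [x ⊙ x ∈ n] says [t <= 1/2]. *)
Definition below_half x := n (x ⊙ x).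

Lemma below_half_qle x : below_half x <-> qle x (¬ x).
Proof. rewrite qle_negr. reflexivity. Qed.
Lemma above_half_qle x : ~ below_half x -> qle (¬ x) x.
Proof.
  intro H. destruct (qle_total x (¬ x)) as [H'|H']; auto.
  exfalso. apply H, below_half_qle, H'.
Qed.

(* In [0,1]: [2(x + y) - 1 = (2x - 1) + 2y] when [y <= 1/2 < x] and [x + y <= 1]. *)
Lemma qeq_sqr_add_mixed x y : ~ below_half x -> below_half y -> n (x ⊙ y) ->
  qeq ((x ⊕ y) ⊙ (x ⊕ y)) (x ⊙ x ⊕ (y ⊕ y)).
Proof.
  intros Hx Hy Hxy.
  apply above_half_qle in Hx. apply below_half_qle in Hy. rewrite <- qle_negr in Hxy.
  set (s := x ⊕ y).
  assert (Hs : qle (¬ s) s).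
  { apply qle_trans with (¬ x); [apply qle_neg, qle_of_le, mvle_addr|].
    apply qle_trans with x; [exact Hx | apply qle_of_le, mvle_addr]. }
  assert (Hrhs : qeq (x ⊙ x ⊕ (y ⊕ y) ⊕ ¬ s) s).
  { assert (Hy' : qeq (y ⊕ ¬ s) (¬ x)).
    { unfold s. rewrite negadd, addC, vee_odotN. apply qeq_veel.
      rewrite <- (negK y). apply qle_neg, Hxy. }
    replace (x ⊙ x ⊕ (y ⊕ y) ⊕ ¬ s) with (x ⊙ x ⊕ y ⊕ (y ⊕ ¬ s)) by mv_ac.
    apply qeq_trans with (x ⊙ x ⊕ y ⊕ ¬ x); [apply qeq_add; [apply qeq_refl | exact Hy']|].
    replace (x ⊙ x ⊕ y ⊕ ¬ x) with (x ⊙ x ⊕ ¬ x ⊕ y) by mv_ac.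
    apply qeq_add; [|apply qeq_refl]. rewrite vee_odot. apply qeq_veel, Hx. }
  apply (qeq_add2r_cancel _ _ (¬ s)).
  - apply qle_of_le, mvle_odotl.
  - change (qle (x ⊙ x ⊕ (y ⊕ y)) s).
    apply qle_trans with (x ⊙ x ⊕ (y ⊕ y) ⊕ ¬ s); [apply qle_of_le, mvle_addr | apply Hrhs].
  - apply qeq_trans with s; [|apply qeq_sym, Hrhs].
    rewrite vee_odot. apply qeq_veel, Hs.
Qed.

Lemma ideal_sqr_odot_dbl x y : n (x ⊙ y) -> n (x ⊙ x ⊙ (y ⊕ y)).
Proof.
  intros Hxy. rewrite <- odotA. apply ideal_qle with (x ⊙ y); auto. apply qle_odot2l.
  apply qle_trans with (¬ y ⊙ (y ⊕ y)); [apply qle_odot2r; rewrite qle_negr; exact Hxy|].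
  rewrite odotC. apply qle_residual. rewrite negK. apply qle_refl.
Qed.

Lemma qeq_add_negadd x y : qle x (¬ y) -> qeq (x ⊕ ¬ (x ⊕ y)) (¬ y).
Proof.
  intro H. rewrite negadd, addC, odotC, vee_odotN. apply qeq_veel, H.
Qed.

(* The two cases of [qeq_sqr_add_dbl]: in [0,1] both sides are [max(0, 2x + 2y - 1)]
   when [x, y <= 1/2]. *)
Lemma ideal_dbl_odot_dbl x y :
  below_half y -> below_half (x ⊕ y) -> n ((x ⊕ x) ⊙ (y ⊕ y)).
Proof.
  intros Hy Hs. apply below_half_qle in Hy, Hs. set (s := x ⊕ y) in *.
  assert (Hxs : qle x (¬ s)) by (apply qle_trans with s; [apply qle_of_le, mvle_addr | exact Hs]).
  assert (Hxy : qle x (¬ y)) by (apply qle_trans with (¬ s); [exact Hxs | apply qle_neg, qle_of_le, mvle_addl]).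
  assert (Hys : qeq (x ⊕ ¬ s) (¬ y)) by (apply qeq_add_negadd, Hxy).
  assert (Hyy : qeq (¬ (y ⊕ y) ⊕ y) (¬ y)) by (rewrite negadd, vee_odotN; apply qeq_veel, Hy).
  rewrite <- qle_negr. apply (qle_add2r_cancel _ _ y).
  - rewrite <- qle_negr. apply qle_trans with (x ⊕ ¬ s); [apply qle_add2l, Hxs | apply Hys].
  - replace (x ⊕ x ⊕ y) with (s ⊕ x) by (unfold s; mv_ac).
    apply qle_trans with (¬ s ⊕ x); [apply qle_add2r, Hs|].
    rewrite addC. apply qle_trans with (¬ y); [apply Hys | apply Hyy].
Qed.

Lemma qeq_sqr_add_dbl_above x y : below_half y -> qle x y -> ~ below_half (x ⊕ y) ->
  qeq ((x ⊕ y) ⊙ (x ⊕ y)) ((x ⊕ x) ⊙ (y ⊕ y)).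
Proof.
  intros Hy Hxy Hs. apply below_half_qle in Hy. apply above_half_qle in Hs. set (s := x ⊕ y) in *.
  assert (Hs2 : n (¬ (s ⊕ s))) by (rewrite negadd; exact Hs).
  assert (Hsy : qle s (y ⊕ y)) by (apply qle_add2r, Hxy).
  apply (qeq_add2r_cancel _ _ (¬ (y ⊕ y))).
  - change (qle (s ⊙ s) (y ⊕ y)). apply qle_trans with s; [apply qle_of_le, mvle_odotl | exact Hsy].
  - change (qle ((x ⊕ x) ⊙ (y ⊕ y)) (y ⊕ y)). apply qle_of_le, mvle_odotr.
  - apply qeq_trans with (x ⊕ x).
    + assert (Hyy : qeq (¬ (y ⊕ y) ⊕ y) (¬ y)) by (rewrite negadd, vee_odotN; apply qeq_veel, Hy).
      assert (Hxy' : n (x ⊙ y)) by (rewrite <- qle_negr; apply qle_trans with y; auto).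
      rewrite addC. apply qeq_trans with ((¬ (y ⊕ y) ⊕ s) ⊙ s).
      { apply qeq_sym, qeq_add_odot_assoc; [|exact Hs2].
        rewrite <- qle_negr. apply qle_neg, Hsy. }
      apply qeq_trans with ((x ⊕ ¬ y) ⊙ s).
      { apply qeq_odot; [|apply qeq_refl].
        replace (¬ (y ⊕ y) ⊕ s) with (¬ (y ⊕ y) ⊕ y ⊕ x) by (unfold s; mv_ac).
        rewrite (addC x). apply qeq_add; [exact Hyy | apply qeq_refl]. }
      apply qeq_trans with (x ⊕ ¬ y ⊙ s).
      { apply qeq_add_odot_assoc; [exact Hxy|].
        replace (¬ y ⊕ s) with (x ⊕ (y ⊕ ¬ y)) by (unfold s; mv_ac).
        rewrite addN, add1, neg1. apply ideal0. }
      apply qeq_add; [apply qeq_refl|]. rewrite odotC. apply qeq_add_odotN, Hxy'.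
    + rewrite vee_odot. apply qeq_sym, qeq_veel. unfold qle.
      replace (¬ (y ⊕ y) ⊙ ¬ (x ⊕ x)) with (¬ (s ⊕ s)) by (rewrite <- negadd; unfold s; f_equal; mv_ac).
      exact Hs2.
Qed.

Lemma qeq_sqr_add_dbl x y : below_half x -> below_half y ->
  qeq ((x ⊕ y) ⊙ (x ⊕ y)) ((x ⊕ x) ⊙ (y ⊕ y)).
Proof.
  intros Hx Hy. destruct (classic (below_half (x ⊕ y))) as [Hs|Hs].
  - apply qeq_of_ideal; [exact Hs | apply ideal_dbl_odot_dbl; auto].
  - destruct (qle_total x y) as [H|H]; [apply qeq_sqr_add_dbl_above; auto|].
    rewrite (addC x y), (odotC (x ⊕ x)) in *. apply qeq_sqr_add_dbl_above; auto.
Qed.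

(** * The embedding of N/n into [0,1] *)

Lemma Rabs_le_pow_half_eq0 (a C : R) : (forall k, Rabs a <= C * (/2)^k) -> a = 0.
Proof.
  intro H. destruct (Req_dec a 0) as [E|E]; auto. exfalso.
  assert (Ha : 0 < Rabs a) by (apply Rabs_pos_lt; auto).
  assert (HC : 0 <= C) by (specialize (H O); simpl in H; pose proof (Rabs_pos a); lra).
  destruct (pow_lt_1_zero (/2) ltac:(rewrite Rabs_right; lra) (Rabs a / (C + 1))) as [K HK].
  { apply Rdiv_lt_0_compat; lra. }
  specialize (HK K (le_n K)). specialize (H K).
  rewrite Rabs_right in HK by (apply Rle_ge, pow_le; lra).
  assert (C * (/2)^K <= C * (Rabs a / (C + 1))) by (apply Rmult_le_compat_l; lra).
  assert (C * (Rabs a / (C + 1)) < Rabs a).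
  { apply Rmult_lt_reg_r with (C + 1); [lra|]. unfold Rdiv.
    rewrite Rmult_assoc, Rmult_assoc, Rinv_l by lra. nra. }
  lra.
Qed.

Lemma halving_eq0 {T : Type} (f : T -> R) (B : R) :
  (forall t, Rabs (f t) <= B) -> (forall t, exists t', Rabs (f t) <= Rabs (f t') / 2) ->
  forall t, f t = 0.
Proof.
  intros HB Hhalf.
  assert (K : forall k t, Rabs (f t) <= B * (/2)^k).
  { induction k; intro t; simpl; [rewrite Rmult_1_r; auto|].
    destruct (Hhalf t) as [t' Ht']. specialize (IHk t'). lra. }
  intro t. apply Rabs_le_pow_half_eq0 with B. intro k. apply K.
Qed.

Lemma Rabs_le_half (a b : R) : a = b / 2 -> Rabs a <= Rabs b / 2.
Proof. intros ->. unfold Rdiv. rewrite Rabs_mult, (Rabs_right (/2)) by lra. lra. Qed.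

(* [digit x] is the first binary digit of the image [t] of [x] in [0,1], and [shift x]
   corresponds to [2t - digit x]; [truncation k x] is the value of the first [k] digits. *)
Definition digit x : R := if excluded_middle_informative (below_half x) then 0 else 1.
Definition shift x : A := if excluded_middle_informative (below_half x) then x ⊕ x else x ⊙ x.
Fixpoint truncation (k : nat) x : R :=
  match k with O => 0 | S k => (digit x + truncation k (shift x)) / 2 end.

Lemma digit_range x : 0 <= digit x <= 1.
Proof. unfold digit. destruct excluded_middle_informative; lra. Qed.
Lemma truncation_range k x : 0 <= truncation k x <= 1.
Proof.
  revert x; induction k; intro x; simpl; [lra|].
  pose proof (digit_range x). pose proof (IHk (shift x)). lra.
Qed.
Lemma truncation_le_S k x : truncation k x <= truncation (S k) x.
Proof.
  revert x; induction k; intro x; [simpl; pose proof (digit_range x); lra|].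
  change (truncation (S k) x) with ((digit x + truncation k (shift x)) / 2).
  change (truncation (S (S k)) x) with ((digit x + truncation (S k) (shift x)) / 2).
  pose proof (IHk (shift x)). lra.
Qed.
Lemma truncation_mono j k x : (j <= k)%nat -> truncation j x <= truncation k x.
Proof.
  induction 1; [lra|]. pose proof (truncation_le_S m x). lra.
Qed.
Lemma truncation_add_le k j x : truncation (k + j) x <= truncation k x + (/2)^k.
Proof.
  revert x; induction k; intro x; simpl; [pose proof (truncation_range j x); lra|].
  pose proof (IHk (shift x)). lra.
Qed.
Lemma truncation_le j k x : truncation j x <= truncation k x + (/2)^k.
Proof.
  destruct (le_lt_dec j k) as [L|L].
  - pose proof (truncation_mono j k x L). pose proof (pow_lt (/2) k ltac:(lra)). lra.
  - replace j with (k + (j - k))%nat by lia. apply truncation_add_le.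
Qed.

Definition truncations x : R -> Prop := fun r => exists k, r = truncation k x.
Lemma truncations_bound x : bound (truncations x).
Proof. exists 1. intros r [k ->]. apply truncation_range. Qed.
Lemma truncations_inhabited x : exists r, truncations x r.
Proof. exists 0, O. reflexivity. Qed.

Definition value x : R :=
  proj1_sig (completeness _ (truncations_bound x) (truncations_inhabited x)).

Lemma value_lub x : is_lub (truncations x) (value x).
Proof. unfold value. destruct completeness as [v Hv]. exact Hv. Qed.
Lemma truncation_le_value k x : truncation k x <= value x.
Proof. apply (value_lub x). exists k; auto. Qed.
Lemma value_le_truncation k x : value x <= truncation k x + (/2)^k.
Proof. apply (value_lub x). intros r [j ->]. apply truncation_le. Qed.
Lemma value_range x : 0 <= value x <= 1.
Proof.
  split; [apply (truncation_le_value O)|].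
  apply (value_lub x). intros r [k ->]. apply truncation_range.
Qed.

Lemma value_rec x : value x = (digit x + value (shift x)) / 2.
Proof.
  cut (value x - (digit x + value (shift x)) / 2 = 0); [lra|].
  apply Rabs_le_pow_half_eq0 with 1. intro k.
  pose proof (truncation_le_value (S k) x). pose proof (value_le_truncation (S k) x).
  pose proof (truncation_le_value k (shift x)). pose proof (value_le_truncation k (shift x)).
  simpl in *. apply Rabs_le. lra.
Qed.
Lemma value_below_half x : below_half x -> value x = value (x ⊕ x) / 2.
Proof.
  intro H. rewrite value_rec. unfold digit, shift.
  destruct excluded_middle_informative; [lra | contradiction].
Qed.
Lemma value_above_half x : ~ below_half x -> value x = (1 + value (x ⊙ x)) / 2.
Proof.
  intro H. rewrite value_rec. unfold digit, shift.
  destruct excluded_middle_informative; [contradiction | lra].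
Qed.

Lemma truncation_qeq k x y : qeq x y -> truncation k x = truncation k y.
Proof.
  revert x y; induction k; intros x y H; simpl; auto.
  assert (Hsqr : qeq (x ⊙ x) (y ⊙ y)) by (apply qeq_odot; auto).
  unfold digit, shift, below_half.
  destruct (excluded_middle_informative (n (x ⊙ x))) as [Hx|Hx];
  destruct (excluded_middle_informative (n (y ⊙ y))) as [Hy|Hy].
  - rewrite (IHk _ (y ⊕ y)); auto. apply qeq_add; auto.
  - exfalso. apply Hy. eapply ideal_qeq; eauto.
  - exfalso. apply Hx. eapply ideal_qeq; eauto. apply qeq_sym; auto.
  - rewrite (IHk _ (y ⊙ y)); auto.
Qed.
Lemma value_qeq x y : qeq x y -> value x = value y.
Proof.
  intro H. cut (value x - value y = 0); [lra|].
  apply Rabs_le_pow_half_eq0 with 2. intro k.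
  pose proof (truncation_le_value k x). pose proof (value_le_truncation k x).
  pose proof (truncation_le_value k y). pose proof (value_le_truncation k y).
  rewrite (truncation_qeq k x y H) in *. apply Rabs_le. lra.
Qed.

Lemma value0 : value mv_zero = 0.
Proof.
  assert (H : below_half (@mv_zero A)) by (unfold below_half; rewrite odot0; apply ideal0).
  pose proof (value_below_half _ H) as E. rewrite add0 in E. lra.
Qed.
Lemma value1 : value mv_one = 1.
Proof.
  assert (H : ~ below_half (@mv_one A)) by (unfold below_half; rewrite odot1; apply ideal_not1).
  pose proof (value_above_half _ H) as E. rewrite odot1 in E. lra.
Qed.
Lemma value_ideal z : n z -> value z = 0.
Proof.
  intro H. rewrite <- value0. apply value_qeq. split; [apply qle0_ideal; auto | apply qle_of_le, mvle_0].
Qed.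
Lemma value_ideal_neg z : n (¬ z) -> value z = 1.
Proof.
  intro H. rewrite <- value1. apply value_qeq. split; [apply qle_of_le, mvle_1 | apply qle1_ideal; auto].
Qed.

Lemma value_neg x : value (¬ x) = 1 - value x.
Proof.
  cut (value (¬ x) + value x - 1 = 0); [lra|].
  apply (halving_eq0 (fun x => value (¬ x) + value x - 1) 1).
  { intro t. pose proof (value_range t). pose proof (value_range (¬ t)). apply Rabs_le. lra. }
  intro t.
  destruct (classic (below_half t)) as [Ht|Ht]; destruct (classic (below_half (¬ t))) as [Hnt|Hnt].
  - exists t. rewrite (value_below_half t Ht), (value_below_half (¬ t) Hnt).
    rewrite (value_ideal_neg (t ⊕ t)) by (rewrite negadd; exact Hnt).
    rewrite (value_ideal_neg (¬ t ⊕ ¬ t)) by (rewrite negadd, !negK; exact Ht).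
    replace (1 / 2 + 1 / 2 - 1) with 0 by lra. rewrite Rabs_R0. lra.
  - exists (t ⊕ t). apply Rabs_le_half.
    rewrite (value_below_half t Ht), (value_above_half (¬ t) Hnt), <- negadd. lra.
  - exists (t ⊙ t). apply Rabs_le_half.
    rewrite (value_above_half t Ht), (value_below_half (¬ t) Hnt), <- negodot. lra.
  - exfalso. destruct (qle_total t (¬ t)) as [H|H].
    + apply Ht, below_half_qle, H.
    + apply Hnt, below_half_qle. rewrite negK. exact H.
Qed.

(* Vanishes in [0,1], where [min(1, s + t) + max(0, s + t - 1) = s + t]. *)
Definition defect x y := value (x ⊕ y) + value (x ⊙ y) - value x - value y.

Lemma defect_neg x y : defect (¬ x) (¬ y) = - defect x y.
Proof. unfold defect. rewrite <- negodot, <- negadd, !value_neg. lra. Qed.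
Lemma defectC x y : defect y x = defect x y.
Proof. unfold defect. rewrite addC, odotC. lra. Qed.
Lemma defect_bound x y : Rabs (defect x y) <= 2.
Proof.
  unfold defect. pose proof (value_range x). pose proof (value_range y).
  pose proof (value_range (x ⊕ y)). pose proof (value_range (x ⊙ y)). apply Rabs_le. lra.
Qed.

Lemma defect_dbl x y : below_half x -> below_half y -> defect (x ⊕ x) (y ⊕ y) = 2 * defect x y.
Proof.
  intros Hx Hy.
  assert (Hxy : n (x ⊙ y)).
  { destruct (qle_total x y) as [H|H].
    - apply ideal_qle with (y ⊙ y); auto. apply qle_odot2r, H.
    - rewrite odotC. apply ideal_qle with (x ⊙ x); auto. apply qle_odot2r, H. }
  unfold defect.
  rewrite (value_ideal _ Hxy), (value_below_half x Hx), (value_below_half y Hy).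
  rewrite <- (value_qeq _ _ (qeq_sqr_add_dbl x y Hx Hy)).
  replace (x ⊕ x ⊕ (y ⊕ y)) with (x ⊕ y ⊕ (x ⊕ y)) by mv_ac.
  destruct (classic (below_half (x ⊕ y))) as [Hs|Hs].
  - rewrite (value_below_half _ Hs), (value_ideal _ Hs). lra.
  - rewrite (value_above_half _ Hs), (value_ideal_neg (x ⊕ y ⊕ (x ⊕ y))). lra.
    rewrite negadd. apply above_half_qle, Hs.
Qed.

Lemma defect_sqr_dbl x y : ~ below_half x -> below_half y -> n (x ⊙ y) ->
  defect (x ⊙ x) (y ⊕ y) = 2 * defect x y.
Proof.
  intros Hx Hy Hxy.
  assert (Hs : ~ below_half (x ⊕ y)).
  { intro Hs. apply Hx. apply ideal_qle with ((x ⊕ y) ⊙ (x ⊕ y)); auto.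
    apply qle_trans with (x ⊙ (x ⊕ y)); [apply qle_odot2l | apply qle_odot2r];
      apply qle_of_le, mvle_addr. }
  unfold defect.
  rewrite (value_ideal _ Hxy), (value_ideal _ (ideal_sqr_odot_dbl x y Hxy)).
  rewrite (value_above_half x Hx), (value_below_half y Hy), (value_above_half _ Hs).
  rewrite (value_qeq _ _ (qeq_sqr_add_mixed x y Hx Hy Hxy)). lra.
Qed.

Lemma defect_halving_mixed x y : ~ below_half x -> below_half y ->
  exists x' y', Rabs (defect x y) <= Rabs (defect x' y') / 2.
Proof.
  intros Hx Hy.
  destruct (classic (n (x ⊙ y))) as [Hxy|Hxy].
  { exists (x ⊙ x), (y ⊕ y). apply Rabs_le_half. rewrite defect_sqr_dbl; auto. lra. }
  assert (Hyx : qle (¬ y) x).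
  { destruct (qle_total x (¬ y)) as [H|H]; auto. exfalso. rewrite qle_negr in H. auto. }
  assert (Hnx : below_half (¬ x)).
  { apply below_half_qle. rewrite negK. apply above_half_qle, Hx. }
  rewrite <- (Ropp_involutive (defect x y)), <- defect_neg, Rabs_Ropp.
  destruct (classic (below_half (¬ y))) as [Hny|Hny].
  - exists (¬ x ⊕ ¬ x), (¬ y ⊕ ¬ y). apply Rabs_le_half. rewrite defect_dbl; auto. lra.
  - exists (¬ y ⊙ ¬ y), (¬ x ⊕ ¬ x). apply Rabs_le_half.
    rewrite defect_sqr_dbl by auto. rewrite defectC. lra.
Qed.

Lemma defect_eq0 x y : defect x y = 0.
Proof.
  change (defect (fst (x, y)) (snd (x, y)) = 0).
  apply (halving_eq0 (fun p : A * A => defect (fst p) (snd p)) 2 (fun p => defect_bound _ _)).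
  intros [a b]. simpl.
  destruct (classic (below_half a)) as [Ha|Ha]; destruct (classic (below_half b)) as [Hb|Hb].
  - exists (a ⊕ a, b ⊕ b). apply Rabs_le_half. simpl. rewrite defect_dbl; auto. lra.
  - destruct (defect_halving_mixed b a Hb Ha) as [x' [y' H]]. exists (x', y'). rewrite <- defectC. auto.
  - destruct (defect_halving_mixed a b Ha Hb) as [x' [y' H]]. exists (x', y'). auto.
  - exists (¬ a ⊕ ¬ a, ¬ b ⊕ ¬ b). rewrite <- Rabs_Ropp. apply Rabs_le_half. simpl.
    rewrite defect_dbl by (apply below_half_qle; rewrite negK; apply above_half_qle; auto).
    rewrite defect_neg. lra.
Qed.

Lemma value_add x y : value (x ⊕ y) = Rmin 1 (value x + value y).
Proof.
  pose proof (defect_eq0 x y) as D. unfold defect in D.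
  pose proof (value_range (x ⊕ y)). pose proof (value_range (x ⊙ y)).
  destruct (qle_total x (¬ y)) as [Hxy|Hxy].
  - rewrite qle_negr in Hxy. rewrite (value_ideal _ Hxy) in D.
    unfold Rmin. destruct Rle_dec; lra.
  - assert (Hs : n (¬ (x ⊕ y))) by (rewrite negadd, odotC; exact Hxy).
    rewrite (value_ideal_neg _ Hs) in *. unfold Rmin. destruct Rle_dec; lra.
Qed.

Lemma value_nmul k x : value (nmul k x) <= INR k * value x.
Proof.
  induction k; simpl nmul.
  - rewrite value0. simpl. lra.
  - rewrite value_add, S_INR. pose proof (Rmin_r 1 (value x + value (nmul k x))). lra.
Qed.

Lemma value_eq0 x : value x = 0 <-> n x.
Proof.
  split; [|apply value_ideal].
  intro H. apply NNPP. intro Hx. destruct (max_ideal_archimedean _ Hx) as [k Hk].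
  pose proof (value_ideal_neg _ Hk). pose proof (value_nmul k x). rewrite H in *. lra.
Qed.

Theorem unit_hom_of_max_ideal : exists h : A -> R, is_unit_hom h /\ forall x, h x = 0 <-> n x.
Proof.
  exists value. split; [|apply value_eq0].
  split; [apply value_range|]. split; [apply value0|]. split; [apply value_neg | apply value_add].
Qed.

End QuotientChain.

(** * Continuity and injectivity of the dual *)

Section UnitHom.
Context {N : MVAlgebra}.
Variable h : N -> R.
Hypothesis h_hom : is_unit_hom h.

Lemma unit_hom_range b : 0 <= h b <= 1. Proof. apply h_hom. Qed.
Lemma unit_hom0 : h mv_zero = 0. Proof. apply h_hom. Qed.
Lemma unit_hom_neg b : h (¬ b) = 1 - h b. Proof. apply h_hom. Qed.
Lemma unit_hom_add a b : h (a ⊕ b) = Rmin 1 (h a + h b). Proof. apply h_hom. Qed.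
Lemma unit_hom1 : h mv_one = 1. Proof. unfold mv_one. rewrite unit_hom_neg, unit_hom0. lra. Qed.
Lemma unit_hom_odot a b : h (a ⊙ b) = 1 - Rmin 1 ((1 - h a) + (1 - h b)).
Proof. unfold mv_odot. rewrite unit_hom_neg, unit_hom_add, !unit_hom_neg. reflexivity. Qed.
Lemma unit_hom_mono a b : a ≤ b -> h a <= h b.
Proof.
  intro H. rewrite (mvle_decomp _ _ H), unit_hom_add.
  pose proof (unit_hom_range a). pose proof (unit_hom_range (b ⊙ ¬ a)).
  unfold Rmin. destruct Rle_dec; lra.
Qed.
End UnitHom.

Lemma hom_of_max_spec {N : MVAlgebra} (I : N -> Prop) : is_maximal I ->
  is_unit_hom (hom_of_max I) /\ forall b, hom_of_max I b = 0 <-> I b.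
Proof. intro HI. unfold hom_of_max. apply epsilon_spec, unit_hom_of_max_ideal, HI. Qed.

Fixpoint dyadic_term {N : MVAlgebra} (l : list bool) (b : N) : N :=
  match l with
  | nil => b
  | true :: l => dyadic_term l (b ⊙ b)
  | false :: l => dyadic_term l (b ⊕ b)
  end.

(* Doubling [t ↦ min(1, 2t)] and squaring [t ↦ max(0, 2t - 1)] follow the binary digits of [m]. *)
Lemma dyadic_threshold {N : MVAlgebra} k : forall m, (m < 2 ^ k)%nat -> exists l,
  forall h : N -> R, is_unit_hom h -> forall b, 0 < h (dyadic_term l b) <-> INR m / 2 ^ k < h b.
Proof.
  induction k; intros m Hm.
  - simpl in Hm. replace m with O by lia. exists nil. intros h Hh b. simpl.
    replace (0 / 1) with 0 by field. tauto.
  - assert (Hp : 0 < 2 ^ k) by (apply pow_lt; lra).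
    assert (E2 : INR (2 ^ k) = 2 ^ k) by (rewrite pow_INR; simpl; f_equal; lra).
    destruct (lt_dec m (2 ^ k)) as [L|L].
    + destruct (IHk m L) as [l Hl]. exists (false :: l). intros h Hh b. simpl dyadic_term.
      rewrite (Hl h Hh), (unit_hom_add h Hh).
      assert (INR m < 2 ^ k) by (rewrite <- E2; apply lt_INR; auto).
      assert (INR m / 2 ^ k < 1) by (apply Rmult_lt_reg_r with (2 ^ k); auto; unfold Rdiv; rewrite Rmult_assoc, Rinv_l; lra).
      replace (INR m / 2 ^ S k) with (INR m / 2 ^ k / 2) by (simpl; field; lra).
      unfold Rmin. destruct Rle_dec; split; intro; lra.
    + assert (L2 : (m - 2 ^ k < 2 ^ k)%nat) by (simpl in Hm; lia).
      destruct (IHk _ L2) as [l Hl]. exists (true :: l). intros h Hh b. simpl dyadic_term.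
      rewrite (Hl h Hh), (unit_hom_odot h Hh), minus_INR, E2 by lia.
      set (q := INR m / 2 ^ k).
      assert (Hq : 1 <= q < 2).
      { assert (2 ^ k <= INR m) by (rewrite <- E2; apply le_INR; lia).
        assert (INR m < 2 * 2 ^ k).
        { replace (2 * 2 ^ k) with (INR (2 ^ S k)) by (rewrite pow_INR; simpl; f_equal; lra).
          apply lt_INR; auto. }
        unfold q. split.
        - apply Rmult_le_reg_r with (2 ^ k); auto. unfold Rdiv; rewrite Rmult_assoc, Rinv_l; lra.
        - apply Rmult_lt_reg_r with (2 ^ k); auto. unfold Rdiv; rewrite Rmult_assoc, Rinv_l; lra. }
      replace ((INR m - 2 ^ k) / 2 ^ k) with (q - 1) by (unfold q; field; lra).
      replace (INR m / 2 ^ S k) with (q / 2) by (unfold q; simpl; field; lra).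
      pose proof (unit_hom_range h Hh b). unfold Rmin. destruct Rle_dec; split; intro; lra.
Qed.

Lemma exists_dyadic_between (c r : R) : 0 <= c -> c < r -> r <= 1 ->
  exists k m, (m < 2 ^ k)%nat /\ c < INR m / 2 ^ k /\ INR m / 2 ^ k < r.
Proof.
  intros Hc Hcr Hr.
  destruct (pow_lt_1_zero (/2) ltac:(rewrite Rabs_right; lra) (r - c)) as [k Hk]; [lra|].
  specialize (Hk k (le_n k)). rewrite Rabs_right, pow_inv in Hk by (apply Rle_ge, pow_le; lra).
  assert (Hp : 0 < 2 ^ k) by (apply pow_lt; lra).
  destruct (archimed (c * 2 ^ k)) as [A1 A2].
  set (z := up (c * 2 ^ k)) in *.
  assert (Z0 : (0 <= z)%Z).
  { apply Z.lt_le_incl, lt_0_IZR. assert (0 <= c * 2 ^ k) by (apply Rmult_le_pos; lra). lra. }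
  exists k, (Z.to_nat z).
  assert (E : INR (Z.to_nat z) = IZR z) by (rewrite INR_IZR_INZ, Z2Nat.id; auto).
  rewrite E.
  assert (B1 : c < IZR z / 2 ^ k).
  { apply Rmult_lt_reg_r with (2 ^ k); auto. unfold Rdiv; rewrite Rmult_assoc, Rinv_l; lra. }
  assert (B2 : IZR z / 2 ^ k < r).
  { apply Rle_lt_trans with (c + / 2 ^ k); [|lra].
    apply Rmult_le_reg_r with (2 ^ k); auto. unfold Rdiv; rewrite Rmult_assoc, Rinv_l by lra.
    rewrite Rmult_plus_distr_r, Rinv_l by lra. lra. }
  split; [|split; auto].
  apply INR_lt. rewrite E, pow_INR. replace (INR 2) with 2 by (simpl; lra).
  apply Rmult_lt_reg_r with (/ 2 ^ k); [apply Rinv_0_lt_compat; auto|].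
  rewrite Rinv_r by lra. unfold Rdiv in B2. lra.
Qed.

Section GeneratedTopology.
Context {X : Type}.
Variable S : (X -> Prop) -> Prop.

Lemma gen_open_topology : is_topology (gen_open S).
Proof.
  split; [|split].
  - intros T HT _. apply HT.
  - intros U V HU HV T HT HS. apply HT; [apply HU | apply HV]; auto.
  - intros F HF T HT HS. apply HT. intros U FU. apply HF; auto.
Qed.
Lemma gen_open_subbasic B : S B -> gen_open S B.
Proof. intros HB T HT HS. auto. Qed.
Lemma gen_open_ext (U V : X -> Prop) : (forall x, U x <-> V x) -> gen_open S U -> gen_open S V.
Proof.
  intros H. replace V with U; auto.
  apply functional_extensionality. intro x. apply propositional_extensionality, H.
Qed.
Lemma gen_open_local (W : X -> Prop) :
  (forall x, W x -> exists U, gen_open S U /\ U x /\ forall y, U y -> W y) -> gen_open S W.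
Proof.
  intro H. apply gen_open_ext with (fun x => exists U, (gen_open S U /\ forall y, U y -> W y) /\ U x).
  - intro x. split; [intros [U [[_ HU] Ux]]; auto|].
    intro Wx. destruct (H x Wx) as [U [HU [Ux HUW]]]. exists U. auto.
  - apply gen_open_topology. intros U [HU _]. exact HU.
Qed.
End GeneratedTopology.

Lemma continuous_max_ptw_coordinates {M N : MVAlgebra} (f : MaxN N -> M -> R) :
  (forall a U, open_set U -> max_open N (fun nn => U (f nn a))) -> continuous_max_ptw f.
Proof.
  intros H V HV. apply (HV (fun W => max_open N (fun nn => W (f nn)))).
  - split; [|split].
    + apply gen_open_topology.
    + intros U W HU HW. apply gen_open_topology; auto.
    + intros F HF. apply gen_open_local. intros x [U [FU Ux]].
      exists (fun nn => U (f nn)). split; [apply HF; auto | split; auto].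
      intros y Uy. exists U; auto.
  - intros B [a [U [HU ->]]]. apply H; auto.
Qed.

Section StarContinuity.
Context {N : MVAlgebra}.

Lemma star_spec (nn : MaxN N) :
  is_unit_hom (fun b : N => star b nn) /\ forall b, star b nn = 0 <-> proj1_sig nn b.
Proof. apply hom_of_max_spec, proj2_sig. Qed.

Lemma star_range (b : N) nn : 0 <= star b nn <= 1.
Proof. apply (unit_hom_range _ (proj1 (star_spec nn))). Qed.

Lemma star_gt_open (b : N) (c : R) : max_open N (fun nn => c < star b nn).
Proof.
  apply gen_open_local. intros nn0 H0.
  destruct (Rlt_le_dec c 0) as [Hc|Hc].
  { exists (fun _ => True). split; [apply gen_open_topology | split; auto].
    intros y _. pose proof (star_range b y). lra. }
  pose proof (star_range b nn0).
  destruct (exists_dyadic_between c (star b nn0)) as [k [m [Hm [B1 B2]]]]; try lra.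
  destruct (dyadic_threshold (N := N) k m Hm) as [l Hl].
  exists (fun nn => ~ proj1_sig nn (dyadic_term l b)). split; [|split].
  - apply gen_open_subbasic. exists (dyadic_term l b). reflexivity.
  - destruct (star_spec nn0) as [Hhom Hker]. rewrite <- Hker.
    pose proof (proj2 (Hl _ Hhom b) B2). lra.
  - intros nn Hnn. destruct (star_spec nn) as [Hhom Hker].
    assert (0 < star (dyadic_term l b) nn).
    { pose proof (star_range (dyadic_term l b) nn).
      destruct (Req_dec (star (dyadic_term l b) nn) 0) as [E|E]; [|lra].
      exfalso. apply Hnn, Hker, E. }
    pose proof (proj1 (Hl _ Hhom b) H1). lra.
Qed.

Lemma star_lt_open (b : N) (c : R) : max_open N (fun nn => star b nn < c).
Proof.
  apply gen_open_ext with (fun nn => 1 - c < star (¬ b) nn); [|apply star_gt_open].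
  intro nn. rewrite (unit_hom_neg _ (proj1 (star_spec nn))). lra.
Qed.

Lemma star_preimage_open (b : N) (U : R -> Prop) :
  open_set U -> max_open N (fun nn => U (star b nn)).
Proof.
  intro HU. apply gen_open_local. intros nn0 H0. destruct (HU _ H0) as [d Hd].
  exists (fun nn => star b nn0 - d < star b nn /\ star b nn < star b nn0 + d). split; [|split].
  - apply gen_open_topology; [apply star_gt_open | apply star_lt_open].
  - pose proof (cond_pos d). lra.
  - intros y [Y1 Y2]. apply Hd. unfold disc. apply Rabs_def1; lra.
Qed.

Lemma star_injective : semisimple N ->
  forall u v : N, (forall nn, star u nn = star v nn) -> u = v.
Proof.
  intros Hs u v Huv. apply eq_of_dist_eq0, Hs. intros I HI.
  destruct (hom_of_max_spec I HI) as [Hhom Hker]. apply Hker.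
  specialize (Huv (exist _ I HI)). unfold star in Huv. simpl in Huv.
  rewrite (unit_hom_add _ Hhom), !(unit_hom_odot _ Hhom), !(unit_hom_neg _ Hhom), Huv.
  pose proof (unit_hom_range _ Hhom v). unfold Rmin. repeat destruct Rle_dec; lra.
Qed.
End StarContinuity.

Lemma prob_map_mono {M N : MVAlgebra} (p : M -> N) : is_prob_map p ->
  forall a b, a ≤ b -> p a ≤ p b.
Proof. intros [Hadd _] a b H. rewrite (mvle_decomp _ _ H), Hadd. apply mvle_addr. Qed.

Lemma dual_state {M N : MVAlgebra} (p : M -> N) : is_prob_map p ->
  forall nn, is_state (dual p nn).
Proof.
  intros Hp nn. destruct (star_spec nn) as [Hhom _].
  pose proof Hp as [Hadd [Hneg H1]]. unfold dual. split; [|split].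
  - intro a. apply star_range.
  - rewrite H1. apply (unit_hom1 _ Hhom).
  - intros a b Hab.
    assert (Hb : b ≤ ¬ a) by (apply odot_eq0_le; rewrite odotC; auto).
    assert (Hpb : p b ≤ ¬ p a) by (rewrite <- Hneg; apply prob_map_mono; auto).
    rewrite Hadd, mvle_wedge by auto.
    pose proof (unit_hom_mono _ Hhom _ _ Hpb) as Hle. cbv beta in Hle.
    rewrite (unit_hom_neg _ Hhom) in Hle. rewrite (unit_hom_add _ Hhom).
    unfold Rmin. destruct Rle_dec; lra.
Qed.

Lemma dual_continuous {M N : MVAlgebra} (p : M -> N) : continuous_max_ptw (dual p).
Proof.
  apply continuous_max_ptw_coordinates. intros a U HU. apply star_preimage_open, HU.
Qed.

Lemma dual_injective {M N : MVAlgebra} : semisimple N ->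
  forall p q : M -> N, dual p = dual q -> p = q.
Proof.
  intros Hs p q E. apply functional_extensionality. intro a.
  apply star_injective; auto. intro nn. exact (f_equal (fun d => d nn a) E).
Qed.

Theorem lemma4p2 (M N : MVAlgebra) :
  (forall p : M -> N, is_prob_map p ->
     (forall n : MaxN N, is_state (dual p n)) /\ continuous_max_ptw (dual p)) /\
  (semisimple N ->
     forall p q : M -> N, is_prob_map p -> is_prob_map q ->
       dual p = dual q -> p = q).
Proof.
  split.
  - intros p Hp. split; [apply dual_state, Hp | apply dual_continuous].
  - intros Hs p q _ _. apply dual_injective, Hs.
Qed.
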